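(* Let $n\ge2$, let $P$ be a partial $n$-Metric on a set $X$, let $x_o\in X$ and let $f:X\to X$. Let $r\in\mathbb{R}$ and let $\varphi:[r,+\infty)\to[0,+\infty)$ be a non-decreasing function with $\varphi(t)=0$ if and only if $t=r$. Suppose that for all natural numbers $i,j$, $$r\le P(\langle f^i(x_o)\rangle^n)\quad\text{and}\quad P(\langle f^{i+1}(x_o)\rangle^{n-1},f^{j+1}(x_o))\le P(\langle f^i(x_o)\rangle^{n-1},f^j(x_o))-\varphi\big(P(\langle f^i(x_o)\rangle^{n-1},f^j(x_o))\big)$$ (i.e. $f$ is an orbital $\varphi_r$-contraction at $x_o$). Then the orbit $\{f^i(x_o)\}_{i\in\mathbb{N}}$ is a Cauchy sequence (i.e. $f$ is a Cauchy function at $x_o$).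
   Context: Notation: $\langle a\rangle^k$ denotes the $k$-tuple $(a,\dots,a)$ inserted into an argument list; $f^0(x_o)=x_o$, $f^{i+1}(x_o)=f(f^i(x_o))$. A partial $n$-Metric on $X$ is a function $P:X^n\to\mathbb{R}$ such that for all $x_1,\dots,x_n,a\in X$: (1) $P(\langle x_1\rangle^n)\le P(\langle x_1\rangle^{n-1},x_2)$; (2) $P$ is invariant under permutations of its arguments; (3) $P(\langle x_1\rangle^{n-1},x_2)=P(\langle x_1\rangle^n)$ and $P(\langle x_2\rangle^{n-1},x_1)=P(\langle x_2\rangle^n)$ iff $x_1=x_2$; (4) $P(x_1,\dots,x_n)\le P(x_1,\dots,x_{n-1},a)+P(\langle a\rangle^{n-1},x_n)-P(\langle a\rangle^n)$. A sequence $\{x_i\}$ is Cauchy if there is $r'\in\mathbb{R}$ (its central distance) such that for every $\epsilon>0$ there is $N$ with $|P(x_{i_1},\dots,x_{i_n})-r'|<\epsilon$ for all $i_1,\dots,i_n>N$. *)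

From Stdlib Require Import Reals.
From mathcomp Require Import all_boot all_fingroup.
Set Implicit Arguments. Unset Strict Implicit. Unset Printing Implicit Defensive.
Local Open Scope R_scope.

Definition cst_tup {X : Type} (n : nat) (a : X) : {ffun 'I_n -> X} := [ffun _ => a].

Definition tup1 {X : Type} (n : nat) (a b : X) : {ffun 'I_n -> X} :=
  [ffun i : 'I_n => if (val i < n.-1)%N then a else b].

Definition repl {X : Type} (n : nat) (x : {ffun 'I_n -> X}) (i : 'I_n) (a : X)
  : {ffun 'I_n -> X} := [ffun j => if j == i then a else x j].

Definition partial_nmetric {X : Type} (n : nat) (P : {ffun 'I_n -> X} -> R) : Prop :=
  (forall x1 x2 : X, (P (cst_tup n x1) <= P (tup1 n x1 x2))) /\
  (forall (x : {ffun 'I_n -> X}) (s : {perm 'I_n}),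
      P [ffun i => x (s i)] = P x) /\
  (forall x1 x2 : X,
      (P (tup1 n x1 x2) = P (cst_tup n x1) /\ P (tup1 n x2 x1) = P (cst_tup n x2))
      <-> x1 = x2) /\
  (forall (x : {ffun 'I_n -> X}) (a : X) (i : 'I_n), val i = n.-1 ->
      P x <= P (repl x i a) + P (tup1 n a (x i)) - P (cst_tup n a)).

Definition pn_cauchy {X : Type} (n : nat) (P : {ffun 'I_n -> X} -> R)
  (u : nat -> X) : Prop :=
  exists r' : R, forall eps : R, 0 < eps ->
    exists N : nat, forall idx : {ffun 'I_n -> nat},
      (forall k, (N < idx k)%N) ->
      Rabs (P [ffun k => u (idx k)] - r') < eps.

(* Write a i j for P(<f^i x>^(n-1), f^j x).  Axioms (1) and (4) make a >= r and
   give the triangle inequality a i j <= a i k + a k j - r, while the contraction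
   makes every diagonal a (i+k) (j+k) decrease by at least phi of its value, so the
   consecutive entries a p p.+1 and a p.+1 p tend to r.  Were some far-out a p q
   >= r + e, the contraction step from (p, q) to (p+1, q+1) plus two triangle
   inequalities would bound phi (r + e) > 0 by the excess of those consecutive
   entries, a contradiction; so all far-out entries tend to r.  Finally, changing
   one coordinate of a tuple at a time (axioms (2) and (4)) shows that a tuple of
   far-out orbit points has P-value close to P(<f^N x>^n), hence close to r. *)
From Stdlib Require Import Reals Lra Classical.
From mathcomp Require Import all_boot all_fingroup zify.
Local Open Scope R_scope.

Section PartialNMetric.

Context {X : Type} {n : nat} {P : {ffun 'I_n -> X} -> R}.
Hypotheses (n_gt0 : (0 < n)%N) (hP : partial_nmetric P).

Let last_ord : 'I_n := Ordinal (n := n) (m := n.-1) ltac:(by rewrite ltn_predL).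

Lemma tup1_triangle (x y z : X) :
  P (tup1 n x y) <= P (tup1 n x z) + P (tup1 n z y) - P (cst_tup n z).
Proof.
have [_ [_ [_ Ptri]]] := hP.
have := Ptri (tup1 n x y) z last_ord erefl.
have -> : repl (tup1 n x y) last_ord z = tup1 n x z.
  apply/ffunP => j; rewrite !ffunE.
  case: (eqVneq j last_ord) => [-> /=|ne]; first by rewrite ltnn.
  suff -> : (j < n.-1)%N by [].
  have : nat_of_ord j != n.-1 by [].
  have := ltn_ord j; lia.
by rewrite ffunE /= ltnn.
Qed.

(* Axiom (4) only replaces the last entry; symmetry (2) moves any entry there. *)
Lemma repl_le (x : {ffun 'I_n -> X}) (i : 'I_n) (a : X) :
  P x <= P (repl x i a) + P (tup1 n a (x i)) - P (cst_tup n a).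
Proof.
have [_ [Pperm [_ Ptri]]] := hP.
pose s := tperm i last_ord.
have := Ptri [ffun j => x (s j)] a last_ord erefl.
have -> : repl [ffun j => x (s j)] last_ord a = [ffun j => repl x i a (s j)].
  apply/ffunP => j; rewrite !ffunE.
  by rewrite -[in s j == i](tpermR i last_ord) (inj_eq perm_inj).
by rewrite !Pperm ffunE tpermR.
Qed.

Lemma tuple_near_cst (z : {ffun 'I_n -> X}) (b : X) (e : R) :
  (forall k, P (tup1 n b (z k)) - P (cst_tup n b) <= e) ->
  (forall k, P (tup1 n (z k) b) - P (cst_tup n (z k)) <= e) ->
  P (cst_tup n b) - INR n * e <= P z <= P (cst_tup n b) + INR n * e.
Proof.
move=> near_b near_z.
pose w m := [ffun k : 'I_n => if (k < m)%N then z k else b].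
suff bound_w m : (m <= n)%N ->
    P (cst_tup n b) - INR m * e <= P (w m) <= P (cst_tup n b) + INR m * e.
  have -> : z = w n by apply/ffunP => k; rewrite ffunE ltn_ord.
  exact: bound_w.
elim: m => [_|m IH lt_mn].
  have -> : w 0%N = cst_tup n b by apply/ffunP => k; rewrite !ffunE.
  rewrite /=; lra.
pose k := Ordinal lt_mn.
have eq_k (j : 'I_n) : (j == k) = (nat_of_ord j == m) by [].
have wS : w m.+1 = repl (w m) k (z k).
  apply/ffunP => j; rewrite !ffunE eq_k.
  case: (ltngtP j m) => [jm|jm|jm].
  - by rewrite ltnS ltnW.
  - by rewrite ltnS leqNgt jm.
  - by rewrite (_ : j = k) ?ltnSn //; apply: val_inj.
have wm : w m = repl (w m.+1) k b.
  apply/ffunP => j; rewrite !ffunE eq_k.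
  case: (ltngtP j m) => [jm|jm|//].
  - by rewrite ltnS ltnW.
  - by rewrite ltnS leqNgt jm.
have up := repl_le (w m.+1) k b.
have lo := repl_le (w m) k (z k).
rewrite -wm [w m.+1 k]ffunE ltnSn in up.
rewrite -wS [w m k]ffunE ltnn in lo.
have := IH (ltnW lt_mn); have := near_b k; have := near_z k.
rewrite S_INR; lra.
Qed.

Lemma pn_cauchy_of_tup1 (u : nat -> X) (r : R) :
  (forall i, r <= P (cst_tup n (u i))) ->
  (forall e, 0 < e -> exists N, forall p q, (N <= p)%N -> (N <= q)%N ->
     P (tup1 n (u p) (u q)) < r + e) ->
  pn_cauchy P u.
Proof.
move=> cst_ge_r tup1_lt.
have [cst_le_tup1 _] := hP.
exists r => eps eps_gt0.
have n_ge0 := pos_INR n.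
pose e := eps / (INR n + 1).
have e_gt0 : 0 < e by apply: Rdiv_lt_0_compat; lra.
have eps_eq : INR n * e + e = eps by rewrite /e; field; lra.
have [N tup1N] := tup1_lt e e_gt0.
exists N => idx idx_gt.
have idx_ge k : (N <= idx k)%N by apply: ltnW.
have near_b k : P (tup1 n (u N) (u (idx k))) - P (cst_tup n (u N)) <= e.
  by have := tup1N N _ (leqnn N) (idx_ge k); have := cst_ge_r N; lra.
have near_z k : P (tup1 n (u (idx k)) (u N)) - P (cst_tup n (u (idx k))) <= e.
  by have := tup1N _ N (idx_ge k) (leqnn N); have := cst_ge_r (idx k); lra.
have [lo up] : P (cst_tup n (u N)) - INR n * e <= P [ffun k => u (idx k)]
    <= P (cst_tup n (u N)) + INR n * e.
  by apply: tuple_near_cst => k; rewrite ffunE; [exact: near_b | exact: near_z].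
have := cst_le_tup1 (u N) (u N); have := tup1N N N (leqnn N) (leqnn N).
have := cst_ge_r N; move=> *; apply: Rabs_def1; lra.
Qed.

End PartialNMetric.

Section Contraction.

Context {r : R} {phi : R -> R}.
Hypotheses (phi_ge0 : forall t, r <= t -> 0 <= phi t)
  (phi_mono : forall s t, r <= s -> s <= t -> phi s <= phi t)
  (phi_eq0 : forall t, r <= t -> (phi t = 0 <-> t = r)).

Lemma phi_gt0 (t : R) : r < t -> 0 < phi t.
Proof.
move=> rt; have := phi_ge0 _ (Rlt_le _ _ rt).
have : phi t <> 0 by move=> /(phi_eq0 _ (Rlt_le _ _ rt)); lra.
lra.
Qed.

Lemma contracting_seq_lt (g : nat -> R) :
  (forall k, r <= g k) -> (forall k, g k.+1 <= g k - phi (g k)) ->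
  forall d, 0 < d -> exists K, forall k, (K <= k)%N -> g k < r + d.
Proof.
move=> g_ge_r g_contr d d_gt0.
have g_nonincr K m : g (K + m)%N <= g K.
  elim: m => [|m IH]; first by rewrite addn0; lra.
  rewrite addnS; have := g_contr (K + m)%N; have := phi_ge0 _ (g_ge_r (K + m)%N).
  lra.
suff [K gK] : exists K, g K < r + d.
  by exists K => k /subnKC <-; have := g_nonincr K (k - K)%N; lra.
apply: NNPP => no_K.
have g_ge k : r + d <= g k by apply: Rnot_lt_le => gk; apply: no_K; exists k.
have phid_gt0 : 0 < phi (r + d) by apply: phi_gt0; lra.
have g_le k : g k <= g 0%N - INR k * phi (r + d).
  elim: k => [|k IH]; first by rewrite /=; lra.
  have := g_contr k; have := phi_mono (r + d) (g k) ltac:(lra) (g_ge k).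
  by rewrite S_INR; lra.
have [k big_k] := INR_archimed (phi (r + d)) (g 0%N - r) phid_gt0.
by have := g_le k; have := g_ge k; lra.
Qed.

Lemma contraction_lt_eventually (a : nat -> nat -> R) :
  (forall i j, r <= a i j) ->
  (forall i j k, a i j <= a i k + a k j - r) ->
  (forall i j, a i.+1 j.+1 <= a i j - phi (a i j)) ->
  forall e, 0 < e -> exists N, forall p q, (N <= p)%N -> (N <= q)%N ->
    a p q < r + e.
Proof.
move=> a_ge_r a_tri a_contr e e_gt0.
have phie_gt0 : 0 < phi (r + e) by apply: phi_gt0; lra.
have third_gt0 : 0 < phi (r + e) / 3 by lra.
have [K1 small1] := contracting_seq_lt (fun k => a k k.+1) (fun k => a_ge_r k k.+1)
  (fun k => a_contr k k.+1) _ third_gt0.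
have [K2 small2] := contracting_seq_lt (fun k => a k.+1 k) (fun k => a_ge_r k.+1 k)
  (fun k => a_contr k.+1 k) _ third_gt0.
exists (maxn K1 K2) => p q Np Nq.
apply: Rnot_le_lt => apq.
have := a_tri p q p.+1; have := a_tri p.+1 q q.+1; have := a_contr p q.
have := phi_mono (r + e) (a p q) ltac:(lra) apq.
have := small1 p ltac:(lia); have := small2 q ltac:(lia).
lra.
Qed.

End Contraction.

Theorem lemma5p12 (X : Type) (n : nat) (hn : (2 <= n)%N)
  (P : {ffun 'I_n -> X} -> R) (hP : partial_nmetric P)
  (xo : X) (f : X -> X) (r : R) (phi : R -> R)
  (hphi_nonneg : forall t : R, r <= t -> 0 <= phi t)
  (hphi_mono : forall s t : R, r <= s -> s <= t -> phi s <= phi t)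
  (hphi_zero : forall t : R, r <= t -> (phi t = 0 <-> t = r))
  (hlow : forall i : nat, r <= P (cst_tup n (iter i f xo)))
  (hcontr : forall i j : nat,
     P (tup1 n (iter i.+1 f xo) (iter j.+1 f xo))
      <= P (tup1 n (iter i f xo) (iter j f xo))
         - phi (P (tup1 n (iter i f xo) (iter j f xo)))) :
  pn_cauchy P (fun i => iter i f xo).
Proof.
have n_gt0 : (0 < n)%N by apply: ltnW.
pose a i j := P (tup1 n (iter i f xo) (iter j f xo)).
have [cst_le_tup1 _] := hP.
have a_ge_r i j : r <= a i j by apply: Rle_trans (hlow i) (cst_le_tup1 _ _).
have a_tri i j k : a i j <= a i k + a k j - r.
  by have := tup1_triangle n_gt0 hP (iter i f xo) (iter j f xo) (iter k f xo);
     have := hlow k; rewrite /a; lra.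
apply: (pn_cauchy_of_tup1 n_gt0 hP _ _ hlow).
exact: (contraction_lt_eventually hphi_nonneg hphi_mono hphi_zero _ a_ge_r a_tri hcontr).
Qed.
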